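(* In the setting below, let $n\in\mathbb{N}$ and let $b\in\operatorname{Mat}_n(D_I)$ satisfy $|b-\mathbb{1}|_t<1$. Then for each $i\in I$ there exist $b_i'\in\operatorname{GL}_n(Q_i')$ and $b_i\in\operatorname{GL}_n(Q_i)$ such that $b=b_i'b_i$.
   Context: Let $K$ be a number field with ring of integers $R$; for $x\in K$ put $\|x\|=\max_{\sigma\in\operatorname{Hom}(K,\mathbb{C})}|\sigma(x)|$, and for a subring $S\subseteq K$ let $S\{t\}=\{\sum_{n\ge0}a_nt^n\in S[[t]]:\limsup_n\|a_n\|^{1/n}\le1\}$. Let $I$ be a finite index set containing the symbol $1$, and for each $i\in I$ let $a_i\in R$ be nonzero and not a unit, with $a_iR+a_jR=R$ for distinct $i,j\in I$. For $J\subseteq I$ let $a_J=\prod_{j\in J}a_j$ ($a_\emptyset=1$), $R_J=R[1/a_J]$, and $D_J=R_J\{t\}$ if $1\notin J$, $D_J=R_J[[t]]$ if $1\in J$; all are subrings of $D_I=R_I[[t]]$. For $i\in I$ put $D_i=D_{I\setminus\{i\}}$, $Q=\operatorname{Quot}(D_I)$, $Q_i=\operatorname{Quot}(D_i)\subseteq Q$ and $Q_i'=\bigcap_{j\in I,j\ne i}Q_j$. $|\cdot|_t=e^{-v_t}$ is the $t$-adic absolute value on $R_I[[t]]$, extended to matrices by the maximum over entries; $\mathbb{1}$ is the identity matrix. *)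

From HB Require Import structures.
From Stdlib Require Import ClassicalEpsilon FunctionalExtensionality Lia.
From mathcomp Require Import all_boot all_order all_algebra all_field.

Set Implicit Arguments.
Unset Strict Implicit.
Unset Printing Implicit Defensive.

Import Order.TTheory GRing.Theory Num.Theory.
Local Open Scope ring_scope.

Section PowerSeries.
Variable K : fieldType.

Record pseries := PSeries { pscoef : nat -> K }.

Lemma ps_ext (f g : pseries) : pscoef f =1 pscoef g -> f = g.
Proof. by case: f g => f [g] /= H; congr PSeries; apply: functional_extensionality. Qed.

Definition ps_eqb (f g : pseries) : bool :=
  if excluded_middle_informative (f = g) then true else false.
Lemma ps_eqP : Equality.axiom ps_eqb.
Proof. by move=> f g; rewrite /ps_eqb; case: excluded_middle_informative => H; constructor. Qed.
HB.instance Definition _ := hasDecEq.Build pseries ps_eqP.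

Definition ps_find (P : pred pseries) (n : nat) : option pseries :=
  match excluded_middle_informative (exists x, P x) with
  | left H => Some (proj1_sig (constructive_indefinite_description _ H))
  | right _ => None
  end.
Lemma ps_find_correct P n x : ps_find P n = Some x -> P x.
Proof.
rewrite /ps_find; case: excluded_middle_informative => // H [<-].
by case: constructive_indefinite_description.
Qed.
Lemma ps_find_complete (P : pred pseries) : (exists x, P x) -> exists n, ps_find P n.
Proof. by move=> H; exists 0%N; rewrite /ps_find; case: excluded_middle_informative. Qed.
Lemma ps_find_ext (P Q : pred pseries) : P =1 Q -> ps_find P =1 ps_find Q.
Proof. by move=> /functional_extensionality ->. Qed.
HB.instance Definition _ :=
  hasChoice.Build pseries ps_find_correct ps_find_complete ps_find_ext.

Definition ps0 := PSeries (fun _ => 0).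
Definition psopp f := PSeries (fun n => - pscoef f n).
Definition psadd f g := PSeries (fun n => pscoef f n + pscoef g n).
Lemma psaddA : associative psadd.
Proof. by move=> f g h; apply: ps_ext => n /=; rewrite addrA. Qed.
Lemma psaddC : commutative psadd.
Proof. by move=> f g; apply: ps_ext => n /=; rewrite addrC. Qed.
Lemma psadd0 : left_id ps0 psadd.
Proof. by move=> f; apply: ps_ext => n /=; rewrite add0r. Qed.
Lemma psaddN : left_inverse ps0 psopp psadd.
Proof. by move=> f; apply: ps_ext => n /=; rewrite addNr. Qed.
HB.instance Definition _ := GRing.isZmodule.Build pseries psaddA psaddC psadd0 psaddN.

Definition pstr (n : nat) (f : pseries) : {poly K} := \poly_(i < n.+1) pscoef f i.

Definition psmul f g := PSeries (fun n => (pstr n f * pstr n g)`_n).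
Definition ps1 := PSeries (fun n => (n == 0%N)%:R).

Definition pagree (n : nat) (p q : {poly K}) := forall k, (k <= n)%N -> p`_k = q`_k.

Lemma pagree_mul n p p' q q' :
  pagree n p p' -> pagree n q q' -> pagree n (p * q) (p' * q').
Proof.
move=> Hp Hq k kn; rewrite !coefM; apply: eq_bigr => i _.
rewrite Hp ?Hq //; [exact: leq_trans (leq_subr _ _) kn|].
by apply: leq_trans kn; rewrite -ltnS.
Qed.

Lemma pagree_tr m n f : (m <= n)%N -> pagree m (pstr m f) (pstr n f).
Proof.
by move=> mn k km; rewrite !coef_poly !ltnS km (leq_trans km mn).
Qed.

Lemma pstr_mul n f g : pagree n (pstr n (psmul f g)) (pstr n f * pstr n g).
Proof.
move=> k kn; rewrite coef_poly ltnS kn /=.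
by apply: pagree_mul; [exact: pagree_tr|exact: pagree_tr|].
Qed.

Lemma psmulA : associative psmul.
Proof.
move=> f g h; apply: ps_ext => n /=.
have -> : (pstr n f * pstr n (psmul g h))`_n = (pstr n f * (pstr n g * pstr n h))`_n.
  exact: (@pagree_mul n _ _ _ _ (fun k _ => erefl) (@pstr_mul n g h) n (leqnn n)).
have -> : (pstr n (psmul f g) * pstr n h)`_n = (pstr n f * pstr n g * pstr n h)`_n.
  exact: (@pagree_mul n _ _ _ _ (@pstr_mul n f g) (fun k _ => erefl) n (leqnn n)).
by rewrite mulrA.
Qed.

Lemma psmulC : commutative psmul.
Proof. by move=> f g; apply: ps_ext => n /=; rewrite mulrC. Qed.

Lemma pstr1 n : pstr n ps1 = 1.
Proof.
apply/polyP => k; rewrite coef_poly coef1 /=.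
by case: ifP => // /negbT; rewrite -leqNgt; case: k.
Qed.

Lemma psmul1 : left_id ps1 psmul.
Proof. by move=> f; apply: ps_ext => n /=; rewrite pstr1 mul1r coef_poly ltnSn. Qed.

Lemma pstrD n f g : pstr n (psadd f g) = pstr n f + pstr n g.
Proof. by apply/polyP => k; rewrite coefD !coef_poly; case: ifP; rewrite ?addr0. Qed.

Lemma psmulDl : left_distributive psmul psadd.
Proof. by move=> f g h; apply: ps_ext => n /=; rewrite pstrD mulrDl coefD. Qed.

Lemma ps1_neq0 : ps1 != ps0.
Proof.
apply/eqP => /(congr1 (fun f => pscoef f 0%N)) /= /eqP.
by rewrite oner_eq0.
Qed.

HB.instance Definition _ :=
  GRing.Zmodule_isComNzRing.Build pseries psmulA psmulC psmul1 psmulDl ps1_neq0.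

Lemma pscoefM (f g : pseries) n :
  pscoef (f * g) n = \sum_(i < n.+1) pscoef f i * pscoef g (n - i).
Proof.
rewrite /= coefM; apply: eq_bigr => i _; rewrite !coef_poly.
by rewrite ltn_ord ltnS leq_subr.
Qed.

Definition ps_unitb (x : pseries) : bool :=
  if excluded_middle_informative (exists y, y * x = 1) then true else false.
Definition ps_inv (x : pseries) : pseries :=
  match excluded_middle_informative (exists y, y * x = 1) with
  | left H => proj1_sig (constructive_indefinite_description _ H)
  | right _ => x
  end.
Lemma ps_mulVx : {in ps_unitb, left_inverse 1 ps_inv *%R}.
Proof.
move=> x; rewrite /ps_unitb /ps_inv unfold_in.
by case: excluded_middle_informative => // H _; case: constructive_indefinite_description.
Qed.
Lemma ps_unitPl x y : y * x = 1 -> ps_unitb x.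
Proof.
move=> H; rewrite /ps_unitb; case: excluded_middle_informative => // [[]].
by exists y.
Qed.
Lemma ps_invr_out : {in [predC ps_unitb], ps_inv =1 id}.
Proof.
move=> x; rewrite inE /= unfold_in /ps_unitb /ps_inv; by case: excluded_middle_informative.

Qed.
HB.instance Definition _ :=
  GRing.ComNzRing_hasMulInverse.Build pseries ps_mulVx ps_unitPl ps_invr_out.

Lemma ps_neq0 (f : pseries) : f != 0 -> exists k, pscoef f k != 0.
Proof.
move=> nf; apply: NNPP => nex; move/eqP: nf; apply; apply: ps_ext => k /=.
by apply/eqP; apply: NNPP => h; apply: nex; exists k; apply/negP.
Qed.

Lemma ps_idomain : GRing.integral_domain_axiom pseries.
Proof.
move=> f g fg0; apply/norP => -[nf ng].
have ef := ps_neq0 nf; have eg := ps_neq0 ng.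
have [a' fa amin] : exists2 a', pscoef f a' != 0 & forall k, pscoef f k != 0 -> (a' <= k)%N.
  by case: (ex_minnP ef) => m; exists m.
have [b' gb bmin] : exists2 b', pscoef g b' != 0 & forall k, pscoef g k != 0 -> (b' <= k)%N.
  by case: (ex_minnP eg) => m; exists m.
have := congr1 (fun h => pscoef h (a' + b')%N) fg0; rewrite pscoefM /=.
have la : (a' < (a' + b').+1)%N by rewrite ltnS leq_addr.
rewrite (bigD1 (Ordinal la)) //= big1 ?addr0.
  by rewrite addKn => /eqP; rewrite mulf_eq0 (negbTE fa) (negbTE gb).
move=> i /eqP ia; have [lt|ge] := ltnP i a'.
  have -> : pscoef f i = 0.
    by apply/eqP; apply: contraTT lt => /amin; rewrite -leqNgt.
  by rewrite mul0r.
have gt : (a' < i)%N by rewrite ltn_neqAle ge andbT; apply/eqP => h; apply: ia; apply: val_inj.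
have -> : pscoef g (a' + b' - i) = 0.
  apply/eqP; apply: contraTT gt => /bmin h.
  by have hi := ltn_ord i; rewrite -leqNgt -(leq_add2r b') -leq_subRL.
by rewrite mulr0.
Qed.

HB.instance Definition _ := GRing.ComUnitRing_isIntegral.Build pseries ps_idomain.

End PowerSeries.

Arguments pscoef {K}.

Notation "x %:F" := (@FracField.tofrac _ x) : ring_scope.

(* Number-theoretic data.  A number field is a finite field extension  *)
(* K of Q ('fieldExtType rat'); Hom(K, C) is the type of ring          *)
(* morphisms K -> algC (algC = algebraic closure of Q inside C, which  *)
(* receives every embedding of a number field).                        *)
Section NumberField.
Variable K : fieldExtType rat.

Definition in_ring_of_integers (x : K) : Prop :=
  exists p : {poly int}, p \is monic /\ root (map_poly (fun z : int => z%:~R) p) x.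

Definition knorm_le (x : K) (c : algC) : Prop :=
  forall sigma : {rmorphism K -> algC}, `|sigma x| <= c.

(* limsup_n ||a_n||^(1/n) <= 1, unfolded: for every eps > 0, eventually
   ||a_n|| <= (1 + eps)^n *)
Definition limsup_root_le1 (a : nat -> K) : Prop :=
  forall eps : algC, 0 < eps ->
    exists N : nat, forall m : nat, (N <= m)%N -> knorm_le (a m) ((1 + eps) ^+ m).

Variables (I : finType) (one : I) (a : I -> K).

Definition aprod (J : {set I}) : K := \prod_(j in J) a j.

Definition in_RJ (J : {set I}) (x : K) : Prop :=
  exists (r : K) (k : nat), in_ring_of_integers r /\ x = r / aprod J ^+ k.

(* D_J = R_J{t} if 1 \notin J, D_J = R_J[[t]] if 1 \in J *)
Definition in_DJ (J : {set I}) (f : pseries K) : Prop :=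
  (forall m, in_RJ J (pscoef f m)) /\ (one \notin J -> limsup_root_le1 (pscoef f)).

(* Q_J = Quot(D_J), viewed inside the fraction field of K[[t]]
   (which contains Q = Quot(D_I)) *)
Definition in_QJ (J : {set I}) (x : {fraction pseries K}) : Prop :=
  exists f g : pseries K, [/\ in_DJ J f, in_DJ J g, g != 0 & x = f%:F / g%:F].

(* Q_i = Quot(D_i), D_i = D_{I \ {i}} *)
Definition in_Qi (i : I) (x : {fraction pseries K}) : Prop := in_QJ [set~ i] x.

Definition in_Qi' (i : I) (x : {fraction pseries K}) : Prop :=
  forall j : I, j != i -> in_Qi j x.

End NumberField.

Definition in_GL (F : fieldType) (n : nat) (S : F -> Prop) (M : 'M[F]_n) : Prop :=
  [/\ M \in unitmx, forall r c, S (M r c) & forall r c, S (invmx M r c)].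

(* |x|_t < 1 for x in K[[t]], |x|_t = exp(-v_t(x)): v_t(x) >= 1, i.e. the
   constant coefficient vanishes; extended to matrices by the maximum *)
Definition tabs_lt1 (K : fieldType) (x : pseries K) : Prop := pscoef x 0%N = 0.
Definition tabs_mx_lt1 (K : fieldType) (n : nat) (M : 'M[pseries K]_n) : Prop :=
  forall r c, tabs_lt1 (M r c).

From HB Require Import structures.
From mathcomp Require Import all_boot all_order all_algebra all_field.
From Stdlib Require Import ClassicalEpsilon FunctionalExtensionality Classical.
From mathcomp Require Import ring zify.
Set Implicit Arguments.
Unset Strict Implicit.
Unset Printing Implicit Defensive.

Import Order.TTheory GRing.Theory Num.Theory.
Local Open Scope ring_scope.

(* Proposition 3.4.  Write b = sum_m B_m t^m with B_0 = 1, B_m in Mat_n(R_I). *)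
(* We factor b = g h coefficientwise: G_0 = H_0 = 1 and G_(m+1) + H_(m+1) is  *)
(* the residual B_(m+1) - sum_(1<=k<=m) G_k H_(m+1-k) in Mat_n(R_I), split     *)
(* entrywise by partial fractions R_I = R_{i} + R_{I\i}.  As R is cocompact   *)
(* in K (every element lies within a fixed C of R for ||.||), the split can   *)
(* keep the coefficients of the factor that must converge bounded (g if      *)
(* i <> 1, h if i = 1); bounded sequences satisfy limsup ||a_m||^(1/m) <= 1.  *)
(* Hence g has entries in D_j for every j <> i and h in D_{I\i}; both have    *)
(* constant term 1, so they are invertible, and their inverses have entries  *)
(* in Q_J because Q_J is a subfield.     *)

Lemma cauchy_root_bound (F : numFieldType) (p : {poly F}) (z : F) :
  p \is monic -> root p z -> `|z| <= 1 + \sum_(i < size p) `|p`_i|.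
Proof.
move=> mp /rootP pz.
have [hz|hz] := real_leP (normr_real z) (@real1 F).
  by apply: le_trans hz _; rewrite lerDl sumr_ge0.
apply: (@le_trans _ _ (\sum_(i < size p) `|p`_i|)); last by rewrite lerDr.
have sp : size p = (size p).-1.+1 by rewrite -polySpred ?monic_neq0.
set d := (size p).-1 in sp.
have ld : p`_d = 1 by move/monicP: mp; rewrite /lead_coef.
have d0 : (0 < d)%N.
  case: d sp ld => // sp ld; move: pz; rewrite horner_coef sp big_ord1 ld.
  by rewrite expr0 mulr1 => /eqP; rewrite oner_eq0.
move: pz; rewrite horner_coef sp big_ord_recr /= ld mul1r => /eqP.
rewrite addr_eq0 eq_sym eqr_oppLR => /eqP hzd.
have key : `|z| ^+ d <= (\sum_(i < d) `|p`_i|) * `|z| ^+ d.-1.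
  rewrite -normrX hzd normrN mulr_suml; apply: le_trans (ler_norm_sum _ _ _) _.
  apply: ler_sum => i _; rewrite normrM normrX ler_wpM2l //.
  by apply: ler_weXn2l; [rewrite ltW|rewrite -ltnS prednK].
have zpos : 0 < `|z| ^+ d.-1 by rewrite exprn_gt0 // (lt_trans ltr01).
have : `|z| <= \sum_(i < d) `|p`_i| by rewrite -(ler_pM2r zpos) -exprS prednK.
by move/le_trans; apply; rewrite big_ord_recr /= lerDl.
Qed.

Section RingOfIntegers.
Variable K : fieldExtType rat.
Local Notation RI := (@in_ring_of_integers K).

(* The ring of integers is the integral closure of Z in K, so the closure   *)
(* lemmas for integral elements of the library apply.                        *)
Lemma RIE (x : K) : RI x <-> integralOver (intr : int -> K) x.
Proof. by split => [[p [Hp Hr]]|[p Hp Hr]]; exists p. Qed.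

Lemma RI_add x y : RI x -> RI y -> RI (x + y).
Proof. by move=> /RIE hx /RIE hy; apply/RIE; apply: integral_add. Qed.
Lemma RI_opp x : RI x -> RI (- x).
Proof. by move=> /RIE hx; apply/RIE; apply: integral_opp. Qed.
Lemma RI_mul x y : RI x -> RI y -> RI (x * y).
Proof. by move=> /RIE hx /RIE hy; apply/RIE; apply: integral_mul. Qed.
Lemma RI_int (z : int) : RI (z%:~R).
Proof. by apply/RIE; apply: (integral_id (intr : {rmorphism int -> K})). Qed.
Lemma RI_0 : RI 0. Proof. exact: (RI_int 0). Qed.
Lemma RI_1 : RI 1. Proof. exact: (RI_int 1). Qed.
Lemma RI_X x m : RI x -> RI (x ^+ m).
Proof. by move=> hx; elim: m => [|m IH]; rewrite ?expr0 ?exprS; [exact: RI_1|exact: RI_mul]. Qed.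
Lemma RI_sum (T : Type) (r : seq T) (P : pred T) (F : T -> K) :
  (forall j, RI (F j)) -> RI (\sum_(j <- r | P j) F j).
Proof. by move=> hF; apply: big_ind => //; [exact: RI_0|exact: RI_add]. Qed.
Lemma RI_prod (T : Type) (r : seq T) (P : pred T) (F : T -> K) :
  (forall j, RI (F j)) -> RI (\prod_(j <- r | P j) F j).
Proof. by move=> hF; apply: big_ind => //; [exact: RI_1|exact: RI_mul]. Qed.

Lemma rat_monic_root (x : K) :
  exists q : {poly rat}, q \is monic /\ root (map_poly (in_alg K) q) x.
Proof.
have /polyOver1P [q hq] := minPolyOver 1 x.
exists q; split; last by rewrite -hq root_minPoly.
by rewrite -(map_monic (in_alg K)) -hq monic_minPoly.
Qed.

Lemma embedding_rat (f : {rmorphism rat -> K}) (sigma : {rmorphism K -> algC})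
  (c : rat) : sigma (f c) = ratr c.
Proof. exact: (fmorph_eq_rat (sigma \o f)). Qed.

(* ||x|| is finite: all conjugates of x are roots of the same rational      *)
(* polynomial, hence bounded by its Cauchy bound.                            *)
Lemma knorm_bounded (x : K) : exists B : algC, 0 <= B /\ knorm_le x B.
Proof.
have [q [mq rq]] := rat_monic_root x.
pose qC : {poly algC} := map_poly ratr q.
exists (1 + \sum_(i < size qC) `|qC`_i|); split; first by rewrite addr_ge0 ?sumr_ge0.
move=> sigma; apply: cauchy_root_bound; first by rewrite map_monic.
have := rmorph_root sigma rq; rewrite -map_poly_comp.
by rewrite (eq_map_poly (embedding_rat (in_alg K) sigma)).
Qed.

Lemma common_denominator (q : {poly rat}) :
  exists2 D : nat, (0 < D)%N & forall i, D%:R * q`_i \is a Num.int.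
Proof.
pose D : nat := (\prod_(j < size q) `|denq q`_j|)%N.
exists D => [|i]; first by rewrite prodn_gt0 // => j; rewrite absz_gt0 denq_neq0.
have [lis|] := ltnP i (size q); last by move/(nth_default 0) ->; rewrite mulr0.
rewrite /D (bigD1 (Ordinal lis)) //= natrM mulrAC rpredM //.
  by rewrite natr_absz gtr0_norm ?denq_gt0 // mulrC -numqE intr_int.
exact: natr_int.
Qed.

(* If x is a root of the monic rational polynomial q and D q_i are integers, *)
(* then D x is a root of the monic integral polynomial X^d q(X / D), i.e. it *)
(* is an algebraic integer.                                                  *)
Lemma scaled_root_integral (q : {poly rat}) (x : K) (D : nat) :
  q \is monic -> root (map_poly (in_alg K) q) x ->
  (forall i, D%:R * q`_i \is a Num.int) -> RI (D%:R * x).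
Proof.
move=> mq rq hD; set d := (size q).-1.
have sq : size q = d.+1 by rewrite /d -polySpred ?monic_neq0.
have qd : q`_d = 1 by move/monicP: mq; rewrite /lead_coef.
pose p : {poly rat} := \poly_(i < d.+1) (q`_i * D%:R ^+ (d - i)).
have pd : p`_d = 1 by rewrite coef_poly ltnSn subnn qd mulr1.
have sp : size p = d.+1 by apply: size_poly_eq; rewrite subnn mulr1 qd oner_neq0.
have pint i : p`_i \is a Num.int.
  have [lid|gid|->] := ltngtP i d; last by rewrite pd.
    rewrite coef_poly ltnS ltnW // -(subnSK lid) exprS mulrCA mulrA.
    by rewrite rpredM ?rpredX ?hD ?natr_int.
  by rewrite nth_default ?sp.
have coefK (r : {poly rat}) j : (map_poly (in_alg K) r)`_j = in_alg K r`_j.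
  by rewrite coef_map_id0 // rmorph0.
apply/RIE; apply: (@integral_root_monic _ _ intr _ (map_poly (in_alg K) p)).
- by rewrite map_monic monicE /lead_coef sp pd.
- move: rq; rewrite /root (@horner_coef_wide _ d.+1); last by rewrite size_map_poly sq.
  rewrite (@horner_coef_wide _ d.+1); last by rewrite size_map_poly sp.
  move=> /eqP rq; apply/eqP.
  rewrite -[RHS](mulr0 ((D%:R : K) ^+ d)) -[in RHS]rq mulr_sumr; apply: eq_bigr => i _.
  rewrite !coefK coef_poly ltn_ord rmorphM rmorphXn rmorph_nat exprMn.
  have lid : (i <= d)%N by rewrite -ltnS ltn_ord.
  have -> : (D%:R : K) ^+ d = D%:R ^+ (d - i) * D%:R ^+ i by rewrite -exprD subnK.
  by rewrite [RHS]mulrACA [_ ^+ (d - i) * _]mulrC.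
- apply/integral_poly => i; rewrite coefK -(floorK (pint i)) rmorph_int.
  exact: (integral_id (intr : {rmorphism int -> K})).
Qed.

Lemma denominator_clearing (x : K) : exists D : nat, (0 < D)%N /\ RI (D%:R * x).
Proof.
have [q [mq rq]] := rat_monic_root x; have [D D0 hD] := common_denominator q.
by exists D; split => //; apply: scaled_root_integral hD.
Qed.

(* R is cocompact in K: there is a constant C such that every y in K lies at *)
(* distance at most C from R.  Write y in a basis (e_i) with d_i e_i integral *)
(* and round the coordinates of y in the basis (d_i e_i).                     *)
Lemma integers_cocompact : exists C : algC, 0 <= C /\
  forall y : K, exists w, RI w /\ knorm_le (y - w) C.
Proof.
pose e := vbasis (fullv : {vspace K}).
have [d hd] := fin_all_exists (fun i : 'I_(\dim (fullv : {vspace K})) =>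
  denominator_clearing e`_i).
pose f i := (d i)%:R * e`_i.
have [B hB] := fin_all_exists (fun i => knorm_bounded (f i)).
exists (\sum_i B i); split; first by apply: sumr_ge0 => i _; case: (hB i).
move=> y; pose q i := coord e i y / (d i)%:R.
exists (\sum_i (Num.floor (q i))%:~R * f i); split.
  by apply: RI_sum => i; apply: RI_mul; [exact: RI_int|case: (hd i)].
have ey : y = \sum_i in_alg K (q i) * f i.
  rewrite {1}(coord_vbasis (memvf y)); apply: eq_bigr => i _.
  rewrite /f /q mulrA -(rmorph_nat (in_alg K)) -rmorphM mulfVK; last first.
    by rewrite pnatr_eq0 -lt0n; case: (hd i).
  by rewrite /= mulr_algl.
rewrite {1}ey -sumrB => sigma.
rewrite rmorph_sum /=; apply: le_trans (ler_norm_sum _ _ _) _.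
apply: ler_sum => i _.
rewrite -(rmorph_int (in_alg K)) -in_algE -mulrBl -rmorphB rmorphM embedding_rat.
have [B0 hBi] := hB i; rewrite normrM -ratr_norm -[B i]mul1r ler_pM ?hBi ?ler0q //.
rewrite -(rmorph1 (ratr : rat -> algC)) ler_rat ger0_norm ?subr_ge0 ?floor_le //.
rewrite lerBlDl ltW // -(intrD _ _ 1).
exact: floorD1_gt.
Qed.
End RingOfIntegers.

Section LocalisedIntegers.
Variables (K : fieldExtType rat) (I : finType) (a : I -> K).
Hypothesis ha_int : forall i : I, in_ring_of_integers (a i).
Hypothesis ha_nz : forall i : I, a i != 0.
Hypothesis ha_cop : forall i j : I, i != j ->
  exists r s : K, [/\ in_ring_of_integers r, in_ring_of_integers s &
                      a i * r + a j * s = 1].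
Local Notation RI := (@in_ring_of_integers K).
Local Notation RJ := (in_RJ a).

Lemma aprod_RI J : RI (aprod a J).
Proof. by apply: RI_prod => j; apply: ha_int. Qed.

Lemma aprod_neq0 J : aprod a J != 0.
Proof. by apply/prodf_neq0 => j _; apply: ha_nz. Qed.

Lemma RJ_RI J x : RI x -> RJ J x.
Proof. by move=> hx; exists x, 0%N; rewrite expr0 divr1. Qed.

Lemma RJ_0 J : RJ J 0. Proof. exact/RJ_RI/RI_0. Qed.
Lemma RJ_1 J : RJ J 1. Proof. exact/RJ_RI/RI_1. Qed.

Lemma RJ_add J x y : RJ J x -> RJ J y -> RJ J (x + y).
Proof.
move=> [r [k [hr ->]]] [r' [k' [hr' ->]]]; have hp := aprod_neq0 J.
exists (r * aprod a J ^+ k' + r' * aprod a J ^+ k), (k + k')%N; split.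
  by apply: RI_add; apply: RI_mul => //; apply/RI_X/aprod_RI.
by rewrite exprD; field; rewrite !expf_neq0.
Qed.

Lemma RJ_opp J x : RJ J x -> RJ J (- x).
Proof.
by move=> [r [k [hr ->]]]; exists (- r), k; split; [exact: RI_opp|rewrite mulNr].
Qed.

Lemma RJ_mul J x y : RJ J x -> RJ J y -> RJ J (x * y).
Proof.
move=> [r [k [hr ->]]] [r' [k' [hr' ->]]]; have hp := aprod_neq0 J.
exists (r * r'), (k + k')%N; split; first exact: RI_mul.
by rewrite exprD; field; rewrite !expf_neq0.
Qed.

Lemma RJ_sum J (T : Type) (r : seq T) (P : pred T) (F : T -> K) :
  (forall j, P j -> RJ J (F j)) -> RJ J (\sum_(j <- r | P j) F j).
Proof. by move=> hF; apply: big_ind => //; [exact: RJ_0|exact: RJ_add]. Qed.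

Lemma RJ_subset (J1 J2 : {set I}) x : J1 \subset J2 -> RJ J1 x -> RJ J2 x.
Proof.
move=> sJ [r [k [hr ->]]].
have e : aprod a J2 = aprod a J1 * aprod a (J2 :\: J1).
  by rewrite /aprod (big_setID J1) /= (setIidPr sJ).
have h1 := aprod_neq0 J1; have h2 := aprod_neq0 (J2 :\: J1).
exists (r * aprod a (J2 :\: J1) ^+ k), k; split.
  by apply: RI_mul => //; apply/RI_X/aprod_RI.
by rewrite e exprMn; field; rewrite !expf_neq0.
Qed.

Definition Rcoprime (u v : K) := exists r s, [/\ RI r, RI s & u * r + v * s = 1].

Lemma Rcoprime_sym u v : Rcoprime u v -> Rcoprime v u.
Proof. by move=> [r [s [hr hs e]]]; exists s, r; split => //; rewrite addrC. Qed.

Lemma Rcoprime1 u : Rcoprime u 1.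
Proof. by exists 0, 1; split; [exact: RI_0|exact: RI_1|rewrite mulr0 add0r mulr1]. Qed.

Lemma Rcoprime_mul u x y : RI u -> RI x -> RI y ->
  Rcoprime u x -> Rcoprime u y -> Rcoprime u (x * y).
Proof.
move=> hu hx hy [r1 [s1 [hr1 hs1 e1]]] [r2 [s2 [hr2 hs2 e2]]].
exists (r1 * u * r2 + r1 * y * s2 + x * s1 * r2), (s1 * s2); split.
- by do !apply: RI_add; do !apply: RI_mul.
- exact: RI_mul.
- by rewrite -[1](mulr1 1) -{1}e1 -e2; ring.
Qed.

Lemma Rcoprime_powl u v k : RI u -> RI v -> Rcoprime u v -> Rcoprime (u ^+ k) v.
Proof.
move=> hu hv c; apply: Rcoprime_sym.
elim: k => [|k IH]; first by rewrite expr0; apply: Rcoprime1.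
by rewrite exprSr; apply: Rcoprime_mul hv (RI_X k hu) hu IH (Rcoprime_sym c).
Qed.

Lemma Rcoprime_pow u v k : RI u -> RI v -> Rcoprime u v -> Rcoprime (u ^+ k) (v ^+ k).
Proof.
move=> hu hv c; apply: Rcoprime_sym; apply: (Rcoprime_powl k hv (RI_X k hu)).
by apply: Rcoprime_sym; apply: Rcoprime_powl.
Qed.

Lemma Rcoprime_aprod (i : I) (S : {set I}) : i \notin S -> Rcoprime (a i) (aprod a S).
Proof.
move=> niS; suff [] : RI (aprod a S) /\ Rcoprime (a i) (aprod a S) by [].
apply: (big_ind (fun x => RI x /\ Rcoprime (a i) x)) => [|x y [hx cx] [hy cy]|j jS].
- by split; [exact: RI_1|exact: Rcoprime1].
- by split; [exact: RI_mul|exact: Rcoprime_mul (ha_int i) hx hy cx cy].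
- have /ha_cop [r [s [hr hs e]]] : i != j by apply: contraNneq niS => ->.
  by split; [exact: ha_int|exists r, s].
Qed.

Lemma aprodT_split (i : I) : aprod a setT = a i * aprod a [set~ i].
Proof.
rewrite /aprod (big_setD1 i) ?in_setT //=; congr (_ * _).
by apply: eq_bigl => j; rewrite !inE andbT.
Qed.

(* Partial fractions: R_I = R_{i} + R_{I\i}, since a_i^k and a_{I\i}^k are  *)
(* coprime.  Moreover, if every element of K lies within C of R, either     *)
(* summand can be chosen of norm at most C, by moving an element of R from  *)
(* one summand to the other.                                                *)
Lemma partial_fraction_split (C : algC)
    (hC : forall y : K, exists w, RI w /\ knorm_le (y - w) C)
    (i : I) (left_bounded : bool) (c : K) : RJ setT c ->
  exists u v, [/\ c = u + v, RJ [set i] u, RJ [set~ i] v &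
     if left_bounded then knorm_le u C else knorm_le v C].
Proof.
move=> [r [k [hr ->]]]; set A := aprod a [set~ i].
have hA : RI A := aprod_RI _; have hA0 : A != 0 := aprod_neq0 _.
have hai := ha_int i; have hai0 := ha_nz i.
have [al [be [hal hbe e]]] : Rcoprime (a i ^+ k) (A ^+ k).
  by apply: Rcoprime_pow => //; apply: Rcoprime_aprod; rewrite !inE eqxx.
have a1 : aprod a [set i] = a i by rewrite /aprod big_set1.
pose u0 := r * be / a i ^+ k; pose v0 := r * al / A ^+ k.
have ec : r / aprod a setT ^+ k = u0 + v0.
  rewrite (aprodT_split i) /u0 /v0 -/A -[r]mulr1 -{1}e.
  by rewrite exprMn; field; rewrite !expf_neq0.
have hu0 w : RI w -> RJ [set i] (u0 + w).
  move=> hw; exists (r * be + w * a i ^+ k), k; split; last first.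
    by rewrite a1 /u0; field; rewrite expf_neq0.
  by apply: RI_add; apply: RI_mul => //; apply: RI_X.
have hv0 w : RI w -> RJ [set~ i] (v0 + w).
  move=> hw; exists (r * al + w * A ^+ k), k; split; last first.
    by rewrite /v0; field; rewrite expf_neq0.
  by apply: RI_add; apply: RI_mul => //; apply: RI_X.
case: left_bounded.
- have [w [hw hb]] := hC u0; exists (u0 - w), (v0 + w).
  by split; [rewrite ec; ring|exact: hu0 (RI_opp hw)|exact: hv0|].
- have [w [hw hb]] := hC v0; exists (u0 + w), (v0 - w).
  by split; [rewrite ec; ring|exact: hu0|exact: hv0 (RI_opp hw)|].
Qed.
End LocalisedIntegers.

Section ExponentialBounds.
Implicit Types (x e d M : algC) (m : nat).

Lemma bernoulli_ineq x m : 0 <= x -> 1 + m%:R * x <= (1 + x) ^+ m.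
Proof.
move=> x0; elim: m => [|m IH]; first by rewrite mul0r addr0 expr0.
rewrite exprSr; apply: le_trans (ler_wpM2r _ IH); last by rewrite addr_ge0.
rewrite mulrDl mul1r mulrDr mulr1 -addrA lerD2l mulrSr mulrDl mul1r.
by rewrite [m%:R * x + x]addrC lerD2l lerDl !mulr_ge0 // ler0n.
Qed.

(* For 0 < d <= 1, (m + 1) d <= (1 + d)^m: this absorbs the number of terms *)
(* of a Cauchy product into an exponential.                                  *)
Lemma succ_mul_le_pow d m : 0 < d -> d <= 1 -> m.+1%:R * d <= (1 + d) ^+ m.
Proof.
move=> d0 d1; apply: le_trans (bernoulli_ineq m (ltW d0)).
by rewrite mulrSr mulrDl mul1r addrC lerD2r.
Qed.

Lemma pow_eventually_ge M d : 0 <= M -> 0 < d ->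
  exists N, forall m, (N <= m)%N -> M <= (1 + d) ^+ m.
Proof.
move=> M0 d0; have := archi_boundP (divr_ge0 M0 (ltW d0)).
set N := Num.Def.archi_bound _ => hN; exists N => m hm.
apply: le_trans (bernoulli_ineq m (ltW d0)); rewrite -(divfK (lt0r_neq0 d0) M).
apply: (@le_trans _ _ (m%:R * d)); last by rewrite lerDr ler01.
by rewrite ler_wpM2r ?ltW //; apply: lt_le_trans hN _; rewrite ler_nat.
Qed.

Lemma sqrt_margin eps : 0 < eps ->
  exists e, [/\ 0 < e, e <= 1 & (1 + e) ^+ 2 <= 1 + eps].
Proof.
move=> e0; have h3 : 0 < 3 + eps by rewrite addr_gt0 // ltr0n.
have ege : 0 < eps / (3 + eps) by exact: divr_gt0.
have ele : eps / (3 + eps) <= 1 by rewrite ler_pdivrMr // mul1r lerDr ler0n.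
have e3 : 3 * (eps / (3 + eps)) <= eps.
  by rewrite mulrA ler_pdivrMr // mulrDr mulrC lerDl mulr_ge0 // ltW.
exists (eps / (3 + eps)); split => //; move: ege ele e3.
set e := eps / (3 + eps) => ege ele e3.
have e2 : e ^+ 2 <= e by rewrite expr2 ler_piMl // ltW.
apply: le_trans (_ : 1 + 3 * e <= _); last by rewrite lerD2l.
by rewrite addrC sqrrD1 addrC lerD2l mulr_natl mulrS lerD2r.
Qed.
End ExponentialBounds.

Section ExponentialGrowth.
Variable K : fieldExtType rat.
Implicit Types f g : nat -> K.

Lemma knorm_le_trans (x : K) (c c' : algC) : knorm_le x c -> c <= c' -> knorm_le x c'.
Proof. by move=> h hc s; apply: le_trans (h s) hc. Qed.

(* f grows at most like (1 + e)^m for every e > 0, up to a constant.  This  *)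
(* is equivalent to limsup ||f m||^(1/m) <= 1 and is the convenient form for *)
(* closure properties.                                                      *)
Definition exp_dominated f := forall e : algC, 0 < e ->
  exists M, 0 <= M /\ forall m, knorm_le (f m) (M * (1 + e) ^+ m).

(* The two formulations of the growth condition are equivalent; the initial *)
(* segment before the limsup bound takes effect is absorbed into M.          *)
Lemma limsup_exp_dominated f : limsup_root_le1 f -> exp_dominated f.
Proof.
move=> H e e0; have [N hN] := H e e0.
have [B hB] := fin_all_exists (fun k : 'I_N => knorm_bounded (f k)).
pose M := 1 + \sum_(k < N) B k.
have M1 : 1 <= M by rewrite lerDl sumr_ge0 // => k _; case: (hB k).
exists M; split => [|m]; first exact: le_trans ler01 M1.
have ex1 : 1 <= (1 + e) ^+ m by rewrite exprn_ege1 // lerDl ltW.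
have [lt|ge] := ltnP m N; last first.
  by apply: knorm_le_trans (hN m ge) _; rewrite ler_peMl // (le_trans ler01) // ltW.
have [B0 hBm] := hB (Ordinal lt); apply: knorm_le_trans hBm _.
apply: le_trans (_ : M <= _); last by rewrite ler_peMr // (le_trans ler01).
apply: le_trans (_ : \sum_(k < N) B k <= _); last by rewrite lerDr ler01.
by rewrite (bigD1 (Ordinal lt)) //= lerDl sumr_ge0 // => k _; case: (hB k).
Qed.

Lemma exp_dominated_limsup f : exp_dominated f -> limsup_root_le1 f.
Proof.
move=> H eps eps0; have [e [e0 e1 he]] := sqrt_margin eps0.
have [M [M0 hM]] := H e e0; have [N hN] := pow_eventually_ge M0 e0.
exists N => m hm; apply: knorm_le_trans (hM m) _.
have ge0 k : 0 <= (1 + e) ^+ k by rewrite exprn_ge0 // addr_ge0 // ltW.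
apply: (@le_trans _ _ ((1 + e) ^+ m * (1 + e) ^+ m)); first by rewrite ler_wpM2r // hN.
rewrite -expr2 -exprM mulnC exprM; apply: lerXn2r => //; rewrite nnegrE //.
exact: le_trans (ge0 2%N) he.
Qed.

Lemma exp_dominated_bounded f (C : algC) : 0 <= C ->
  (forall m, knorm_le (f m) C) -> exp_dominated f.
Proof.
move=> C0 hC e e0; exists C; split => // m; apply: knorm_le_trans (hC m) _.
by rewrite ler_peMr // exprn_ege1 // lerDl ltW.
Qed.

Lemma exp_dominated_add f g : exp_dominated f -> exp_dominated g ->
  exp_dominated (fun m => f m + g m).
Proof.
move=> hf hg e e0; have [Mf [Mf0 hMf]] := hf e e0; have [Mg [Mg0 hMg]] := hg e e0.
exists (Mf + Mg); split => [|m s]; first by rewrite addr_ge0.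
rewrite rmorphD; apply: le_trans (ler_normD _ _) _.
by rewrite mulrDl lerD ?hMf ?hMg.
Qed.

Lemma exp_dominated_opp f : exp_dominated f -> exp_dominated (fun m => - f m).
Proof.
move=> hf e e0; have [M [M0 hM]] := hf e e0; exists M; split => // m s.
by rewrite rmorphN normrN hM.
Qed.

(* The Cauchy product of two exponentially dominated sequences is one: the  *)
(* m + 1 terms are each bounded by Mf Mg (1 + e)^m, and m + 1 <= (1 + e)^m/e. *)
Lemma exp_dominated_mul f g : exp_dominated f -> exp_dominated g ->
  exp_dominated (fun m => \sum_(i < m.+1) f i * g (m - i)%N).
Proof.
move=> hf hg eps eps0; have [e [e0 e1 he]] := sqrt_margin eps0.
have [Mf [Mf0 hMf]] := hf e e0; have [Mg [Mg0 hMg]] := hg e e0.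
have ge0 k : 0 <= (1 + e) ^+ k by rewrite exprn_ge0 // addr_ge0 // ltW.
have MMe0 : 0 <= Mf * Mg / e by rewrite !mulr_ge0 // invr_ge0 ltW.
exists (Mf * Mg / e); split => // m s.
rewrite rmorph_sum; apply: le_trans (ler_norm_sum _ _ _) _.
apply: (@le_trans _ _ (\sum_(i < m.+1) Mf * Mg * (1 + e) ^+ m)).
  apply: ler_sum => i _; rewrite rmorphM normrM.
  have -> : Mf * Mg * (1 + e) ^+ m = (Mf * (1 + e) ^+ i) * (Mg * (1 + e) ^+ (m - i)).
    by rewrite mulrACA -exprD subnKC // -ltnS.
  by apply: ler_pM; rewrite ?normr_ge0 //; [exact: hMf|exact: hMg].
rewrite sumr_const card_ord -mulr_natr.
have h2 : m.+1%:R <= (1 + e) ^+ m / e by rewrite ler_pdivlMr // succ_mul_le_pow.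
apply: (@le_trans _ _ (Mf * Mg / e * ((1 + e) ^+ m * (1 + e) ^+ m))).
  have -> : Mf * Mg / e * ((1 + e) ^+ m * (1 + e) ^+ m) =
      Mf * Mg * (1 + e) ^+ m * ((1 + e) ^+ m / e) by ring.
  by rewrite ler_wpM2l // !mulr_ge0.
rewrite -expr2 -exprM mulnC exprM ler_wpM2l //; apply: lerXn2r; rewrite ?nnegrE //.
exact: le_trans (ge0 2%N) he.
Qed.

Lemma limsup_root_le1_bounded f (C : algC) : 0 <= C ->
  (forall m, knorm_le (f m) C) -> limsup_root_le1 f.
Proof. by move=> C0 hC; apply/exp_dominated_limsup/(exp_dominated_bounded C0). Qed.
End ExponentialGrowth.

(* Cramer's rule: the inverse of a matrix has entries in any subfield that   *)
(* contains the entries of the matrix.                                       *)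
Section SubfieldInverse.
Variables (F : fieldType) (S : F -> Prop).
Hypotheses (S0 : S 0) (S1 : S 1) (SN : forall x, S x -> S (- x))
  (SD : forall x y, S x -> S y -> S (x + y)) (SM : forall x y, S x -> S y -> S (x * y))
  (SV : forall x, S x -> S x^-1).

Lemma subfield_sign k : S ((-1) ^+ k).
Proof. by elim: k => [|k IH]; rewrite ?expr0 // exprS; apply: SM => //; apply: SN. Qed.

Lemma subfield_det n (A : 'M[F]_n) : (forall i j, S (A i j)) -> S (\det A).
Proof.
move=> hA; apply: big_ind => // s _; apply: SM; first exact: subfield_sign.
by apply: big_ind => // i _; apply: hA.
Qed.

Lemma subfield_invmx n (A : 'M[F]_n) :
  (forall i j, S (A i j)) -> forall i j, S (invmx A i j).
Proof.
move=> hA i j; rewrite /invmx; case: ifP => // _; rewrite !mxE.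
apply: SM; first exact/SV/subfield_det.
apply: SM; first exact: subfield_sign.
by apply: subfield_det => k l; rewrite !mxE.
Qed.
End SubfieldInverse.

Section PowerSeriesRings.
Variables (K : fieldExtType rat) (I : finType) (one : I) (a : I -> K).
Hypothesis ha_int : forall i : I, in_ring_of_integers (a i).
Hypothesis ha_nz : forall i : I, a i != 0.
Local Notation DJ := (in_DJ one a).
Local Notation QJ := (in_QJ one a).

Lemma DJ_0 J : DJ J 0.
Proof.
split => [m|_]; first exact: RJ_0.
by apply: (limsup_root_le1_bounded (lexx 0)) => m s; rewrite rmorph0 normr0.
Qed.

Lemma DJ_1 J : DJ J 1.
Proof.
split => [m|_]; first by rewrite /=; case: (m == 0)%N; [exact: RJ_1|exact: RJ_0].
apply: (limsup_root_le1_bounded ler01) => m s /=.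
by rewrite rmorph_nat; case: (m == 0)%N; rewrite ?normr0 ?normr1.
Qed.

Lemma DJ_add J f g : DJ J f -> DJ J g -> DJ J (f + g).
Proof.
move=> [hf cf] [hg cg]; split => [m|hJ]; first exact: (RJ_add ha_int ha_nz).
apply/exp_dominated_limsup/exp_dominated_add; apply: limsup_exp_dominated.
  exact: cf.
exact: cg.
Qed.

Lemma DJ_opp J f : DJ J f -> DJ J (- f).
Proof.
move=> [hf cf]; split => [m|hJ]; first exact: RJ_opp.
by apply/exp_dominated_limsup/exp_dominated_opp/limsup_exp_dominated/cf.
Qed.

Lemma DJ_mul J f g : DJ J f -> DJ J g -> DJ J (f * g).
Proof.
move=> [hf cf] [hg cg]; split => [m|hJ].
  by rewrite pscoefM; apply: (RJ_sum ha_int ha_nz) => i _; apply: (RJ_mul ha_nz).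
have -> : pscoef (f * g) = fun m => \sum_(i < m.+1) pscoef f i * pscoef g (m - i)%N.
  by apply: functional_extensionality => m; rewrite pscoefM.
apply/exp_dominated_limsup/exp_dominated_mul; apply: limsup_exp_dominated.
  exact: cf.
exact: cg.
Qed.

Lemma QJ_frac J f : DJ J f -> QJ J f%:F.
Proof.
by move=> hf; exists f, 1; split; rewrite ?tofrac1 ?divr1 ?oner_neq0 //; apply: DJ_1.
Qed.

Lemma QJ_0 J : QJ J 0.
Proof. by rewrite -tofrac0; apply/QJ_frac/DJ_0. Qed.

Lemma QJ_1 J : QJ J 1.
Proof. by rewrite -tofrac1; apply/QJ_frac/DJ_1. Qed.

Lemma QJ_add J x y : QJ J x -> QJ J y -> QJ J (x + y).
Proof.
move=> [f [g [hf hg g0 ->]]] [f' [g' [hf' hg' g0' ->]]].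
exists (f * g' + f' * g), (g * g'); split; rewrite ?mulf_neq0 //.
- by apply: DJ_add; apply: DJ_mul.
- exact: DJ_mul.
- by rewrite tofracD !tofracM addf_div ?tofrac_eq0.
Qed.

Lemma QJ_opp J x : QJ J x -> QJ J (- x).
Proof.
move=> [f [g [hf hg g0 ->]]]; exists (- f), g; split => //; first exact: DJ_opp.
by rewrite tofracN mulNr.
Qed.

Lemma QJ_mul J x y : QJ J x -> QJ J y -> QJ J (x * y).
Proof.
move=> [f [g [hf hg g0 ->]]] [f' [g' [hf' hg' g0' ->]]].
exists (f * f'), (g * g'); split; rewrite ?mulf_neq0 //; try exact: DJ_mul.
by rewrite !tofracM mulf_div.
Qed.

Lemma QJ_inv J x : QJ J x -> QJ J x^-1.
Proof.
move=> [f [g [hf hg g0 ->]]]; have [->|f0] := eqVneq f 0.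
  by rewrite tofrac0 mul0r invr0; apply: QJ_0.
by exists g, f; split => //; rewrite invf_div.
Qed.

Lemma QJ_invmx J n (A : 'M[{fraction pseries K}]_n) :
  (forall i j, QJ J (A i j)) -> forall i j, QJ J (invmx A i j).
Proof.
by apply: subfield_invmx; [exact: QJ_0|exact: QJ_1|exact: QJ_opp|exact: QJ_add
  |exact: QJ_mul|exact: QJ_inv].
Qed.
End PowerSeriesRings.

(* Coefficientwise factorisation.  Over any ring A, let B be a sequence with *)
(* B 0 = 1 (the coefficients of a series congruent to 1 mod t) and split a   *)
(* decomposition c = (split c).1 + (split c).2.  Solving                     *)
(*   G (m+1) + H (m+1) = B (m+1) - sum_(1 <= k <= m) G k H (m+1-k)           *)
(* with (G (m+1), H (m+1)) = split(rhs) yields sequences G, H with G 0 = H 0 *)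
(* = 1 whose Cauchy product is B.                                            *)
Section Factorisation.
Variables (A : pzRingType) (split : A -> A * A) (B : nat -> A).

(* factor_state m holds the first m + 1 terms of both sequences. *)
Fixpoint factor_state (m : nat) : (nat -> A) * (nat -> A) :=
  if m is m'.+1 then
    let gh := factor_state m' in
    let c := B m - \sum_(1 <= k < m) gh.1 k * gh.2 (m - k)%N in
    (fun j => if j == m then (split c).1 else gh.1 j,
     fun j => if j == m then (split c).2 else gh.2 j)
  else (fun _ => 1, fun _ => 1).

Definition lfactor (j : nat) : A := (factor_state j).1 j.
Definition rfactor (j : nat) : A := (factor_state j).2 j.

Definition factor_residual (m : nat) : A :=
  B m.+1 - \sum_(1 <= k < m.+1) lfactor k * rfactor (m.+1 - k)%N.

Lemma factor_state_stable j m :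
  (j <= m)%N -> (factor_state m).1 j = lfactor j /\ (factor_state m).2 j = rfactor j.
Proof.
elim: m => [|m IH]; first by rewrite leqn0 => /eqP ->.
rewrite leq_eqVlt => /orP[/eqP -> //|hj]; have [h1 h2] := IH hj.
by rewrite /= !ifN ?(ltn_eqF hj).
Qed.

Lemma lfactor0 : lfactor 0 = 1. Proof. by []. Qed.
Lemma rfactor0 : rfactor 0 = 1. Proof. by []. Qed.

Lemma factorS m : lfactor m.+1 = (split (factor_residual m)).1 /\
                  rfactor m.+1 = (split (factor_residual m)).2.
Proof.
have -> : factor_residual m = B m.+1 -
    \sum_(1 <= k < m.+1) (factor_state m).1 k * (factor_state m).2 (m.+1 - k)%N.
  congr (_ - _); rewrite big_nat_cond [RHS]big_nat_cond.
  apply: eq_bigr => k /andP[/andP[k1 km] _].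
  have [km' mk] : (k <= m)%N /\ (m.+1 - k <= m)%N by split; lia.
  by have [-> _] := factor_state_stable km'; have [_ ->] := factor_state_stable mk.
by rewrite /lfactor /rfactor /= !eqxx.
Qed.

Hypothesis split_add : forall c, (split c).1 + (split c).2 = c.
Hypothesis B0 : B 0 = 1.

Lemma factor_convolution m : B m = \sum_(k < m.+1) lfactor k * rfactor (m - k)%N.
Proof.
case: m => [|m]; first by rewrite big_ord1 B0 lfactor0 rfactor0 mul1r.
rewrite big_ord_recl big_ord_recr /= subn0 subnn lfactor0 rfactor0 mul1r mulr1.
have bump0 k : bump 0 k = k.+1 by rewrite /bump add1n.
under eq_bigr do rewrite bump0.
rewrite bump0 addrCA addrC [rfactor _ + _]addrC.
have [-> ->] := factorS m; rewrite split_add /factor_residual.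
by rewrite big_add1 big_mkord subrK.
Qed.

Variables (S P Q : A -> Prop).
Hypotheses (S0 : S 0) (SD : forall x y, S x -> S y -> S (x + y))
  (SB : forall x y, S x -> S y -> S (x - y)) (SPQ : forall x y, P x -> Q y -> S (x * y))
  (SB_coef : forall m, S (B m)) (P1 : P 1) (Q1 : Q 1)
  (split_PQ : forall c, S c -> P (split c).1 /\ Q (split c).2).

Lemma factor_invariant m : P (lfactor m) /\ Q (rfactor m).
Proof.
elim/ltn_ind: m => -[|m] IH; first by split.
have [-> ->] := factorS m; apply: split_PQ; apply: SB => //.
rewrite big_nat_cond; apply: big_ind => // k /andP[/andP[k1 km] _]; apply: SPQ.
  by case: (IH k km).
by have /IH[] : (m.+1 - k < m.+1)%N by lia.
Qed.
End Factorisation.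

Section SeriesMatrices.
Variables (K : fieldType) (n : nat).

Definition coefmx (M : 'M[pseries K]_n) (m : nat) : 'M[K]_n :=
  \matrix_(r, c) pscoef (M r c) m.

Definition seriesmx (F : nat -> 'M[K]_n) : 'M[pseries K]_n :=
  \matrix_(r, c) PSeries (fun m => F m r c).

Lemma coefmxK F m : coefmx (seriesmx F) m = F m.
Proof. by apply/matrixP => r c; rewrite !mxE. Qed.

Lemma coefmx_inj M N : (forall m, coefmx M m = coefmx N m) -> M = N.
Proof.
move=> eMN; apply/matrixP => r c; apply: ps_ext => m.
by have /matrixP/(_ r c) := eMN m; rewrite !mxE.
Qed.

Lemma pscoef_sum (T : Type) (s : seq T) (P : pred T) (F : T -> pseries K) m :
  pscoef (\sum_(j <- s | P j) F j) m = \sum_(j <- s | P j) pscoef (F j) m.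
Proof.
elim: s => [|x s IH]; first by rewrite !big_nil.
by rewrite !big_cons; case: (P x); rewrite -IH.
Qed.

Lemma coefmxM M N m :
  coefmx (M *m N) m = \sum_(k < m.+1) coefmx M k *m coefmx N (m - k)%N.
Proof.
apply/matrixP => r c; rewrite summxE !mxE pscoef_sum.
under [RHS]eq_bigr do rewrite mxE.
rewrite exchange_big; apply: eq_bigr => l _.
by rewrite pscoefM; apply: eq_bigr => k _; rewrite !mxE.
Qed.

Definition ev0 (f : pseries K) : K := pscoef f 0.
Lemma ev0_zmod : zmod_morphism ev0. Proof. by []. Qed.
HB.instance Definition _ := GRing.isZmodMorphism.Build (pseries K) K ev0 ev0_zmod.
Lemma ev0_monoid : monoid_morphism ev0.
Proof. by split => // f g; rewrite /ev0 pscoefM big_ord1. Qed.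
HB.instance Definition _ := GRing.isMonoidMorphism.Build (pseries K) K ev0 ev0_monoid.

(* A matrix with constant term 1 has determinant with constant term 1, so it *)
(* is invertible over the fraction field.                                    *)
Lemma unitmx_const1 M : coefmx M 0 = 1%:M -> map_mx (fun x => x%:F) M \in unitmx.
Proof.
move=> hM; rewrite unitmxE det_map_mx unitfE tofrac_eq0; apply/eqP => det0.
have := det_map_mx ev0 M; rewrite det0 rmorph0.
have -> : map_mx ev0 M = 1%:M by rewrite -hM; apply/matrixP => r c; rewrite !mxE.
by rewrite det1 => /eqP; rewrite oner_eq0.
Qed.

Lemma coefmx0_tabs M : tabs_mx_lt1 (M - 1%:M) -> coefmx M 0 = 1%:M.
Proof.
move=> hM; apply/matrixP => r c; have := hM r c; rewrite /tabs_lt1 !mxE.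
by move/eqP; rewrite [pscoef _ _]/= subr_eq0 => /eqP ->; case: (r == c).
Qed.
End SeriesMatrices.

Lemma GL_of_DJ (K : fieldExtType rat) (I : finType) (one : I) (a : I -> K)
    (ha_int : forall i : I, in_ring_of_integers (a i)) (ha_nz : forall i : I, a i != 0)
    (J : {set I}) n (M : 'M[pseries K]_n) :
  (forall r c, in_DJ one a J (M r c)) -> coefmx M 0 = 1%:M ->
  in_GL (in_QJ one a J) (map_mx (fun x => x%:F) M).
Proof.
move=> hM M0; have hQ r c : in_QJ one a J (map_mx (fun x => x%:F) M r c).
  by rewrite mxE; apply: QJ_frac.
by split; [exact: unitmx_const1|exact: hQ|exact: QJ_invmx].
Qed.

Section Factorisation_of_b.
Variables (K : fieldExtType rat) (I : finType) (one : I) (a : I -> K).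
Hypothesis ha_int : forall i : I, in_ring_of_integers (a i).
Hypothesis ha_nz : forall i : I, a i != 0.
Hypothesis ha_cop : forall i j : I, i != j ->
  exists r s : K, [/\ in_ring_of_integers r, in_ring_of_integers s &
                      a i * r + a j * s = 1].
Variables (n : nat) (b : 'M[pseries K]_n) (i : I).
Hypothesis hb : forall r c, in_DJ one a [set: I] (b r c).
Hypothesis hb1 : tabs_mx_lt1 (b - 1%:M).
Local Notation RI := (@in_ring_of_integers K).
Local Notation RJ := (in_RJ a).

Let cocompact := integers_cocompact K.
Definition C : algC := proj1_sig (constructive_indefinite_description _ cocompact).
Lemma C_spec : 0 <= C /\ forall y : K, exists w, RI w /\ knorm_le (y - w) C.
Proof. exact: proj2_sig (constructive_indefinite_description _ cocompact). Qed.

(* The factor required to converge is the one that must lie in D_1: g when *)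
(* i <> 1, h when i = 1.                                                    *)
Definition left_bounded : bool := i != one.

Definition good_split (c : K) (uv : K * K) : Prop := c = uv.1 + uv.2 /\ (RJ setT c ->
  [/\ RJ [set i] uv.1, RJ [set~ i] uv.2 &
      if left_bounded then knorm_le uv.1 C else knorm_le uv.2 C]).

Lemma good_split_exists c : exists uv, good_split c uv.
Proof.
case: (classic (RJ setT c)) => hc; last by exists (c, 0); split; [rewrite /= addr0|move/hc].
have [u [v [-> hu hv hb']]] :=
  partial_fraction_split ha_int ha_nz ha_cop (proj2 C_spec) i left_bounded hc.
by exists (u, v).
Qed.

Definition esplit (c : K) : K * K :=
  proj1_sig (constructive_indefinite_description _ (good_split_exists c)).
Lemma esplitP c : good_split c (esplit c).
Proof. exact: proj2_sig (constructive_indefinite_description _ (good_split_exists c)). Qed.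

Definition msplit (c : 'M[K]_n) : 'M[K]_n * 'M[K]_n :=
  (map_mx (fun x => (esplit x).1) c, map_mx (fun x => (esplit x).2) c).

Definition G : nat -> 'M[K]_n := lfactor msplit (coefmx b).
Definition H : nat -> 'M[K]_n := rfactor msplit (coefmx b).

Lemma b_factor : b = seriesmx G *m seriesmx H.
Proof.
apply: coefmx_inj => m; rewrite coefmxM.
under eq_bigr do rewrite !coefmxK mulmxE.
apply: factor_convolution; last exact: coefmx0_tabs.
by move=> c; apply/matrixP => r s; rewrite !mxE -(proj1 (esplitP _)).
Qed.

Definition bounded_by_1C (M : 'M[K]_n) := forall r c, knorm_le (M r c) (1 + C).

Lemma GH_coefficients m :
  [/\ forall r c, RJ [set i] (G m r c), forall r c, RJ [set~ i] (H m r c),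
      left_bounded -> bounded_by_1C (G m) & ~~ left_bounded -> bounded_by_1C (H m)].
Proof.
have C1 : C <= 1 + C by rewrite lerDr ler01.
have id_ok (J : {set I}) : (forall r c, RJ J ((1%:M : 'M[K]_n) r c)) /\ bounded_by_1C 1%:M.
  split => r c; rewrite mxE; first by case: (r == c); [exact: RJ_1|exact: RJ_0].
  move=> s; rewrite rmorphMn rmorph1; apply: le_trans (_ : 1 <= _); last first.
    by rewrite lerDl (proj1 C_spec).
  by case: (r == c); rewrite ?normr0 ?normr1 ?ler01.
pose S (M : 'M[K]_n) := forall r c, RJ setT (M r c).
pose P (M : 'M[K]_n) := (forall r c, RJ [set i] (M r c)) /\ (left_bounded -> bounded_by_1C M).
pose Q (M : 'M[K]_n) :=
  (forall r c, RJ [set~ i] (M r c)) /\ (~~ left_bounded -> bounded_by_1C M).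
have S0 : S 0 by move=> r c; rewrite mxE; apply: RJ_0.
have SD x y : S x -> S y -> S (x + y).
  by move=> hx hy r c; rewrite mxE; apply: (RJ_add ha_int ha_nz).
have SB x y : S x -> S y -> S (x - y).
  by move=> hx hy r c; rewrite !mxE; apply: (RJ_add ha_int ha_nz) => //; apply: RJ_opp.
have SPQ x y : P x -> Q y -> S (x * y).
  move=> [hx _] [hy _] r c; rewrite mxE; apply: (RJ_sum ha_int ha_nz) => l _.
  by apply: (RJ_mul ha_nz); apply: (RJ_subset ha_int ha_nz (subsetT _)).
have Sb m' : S (coefmx b m') by move=> r c; rewrite mxE; case: (hb r c).
have P1 : P 1 by have [hJ h1] := id_ok [set i]; split.
have Q1 : Q 1 by have [hJ h1] := id_ok [set~ i]; split.
have splitPQ M : S M -> P (msplit M).1 /\ Q (msplit M).2.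
  move=> hM; have hs r c := proj2 (esplitP (M r c)) (hM r c).
  split; split => [r c|hl r c s]; rewrite mxE; have [h1 h2 h3] := hs r c => //.
  + by move: h3; rewrite hl => /(_ s) /le_trans; apply.
  + by move: h3; rewrite (negbTE hl) => /(_ s) /le_trans; apply.
by have [[hG bG] [hH bH]] := factor_invariant S0 SD SB SPQ Sb P1 Q1 splitPQ m.
Qed.

Lemma C1_ge0 : 0 <= 1 + C.
Proof. by rewrite addr_ge0 ?ler01 ?(proj1 C_spec). Qed.

(* g = sum G_m t^m lies in D_j for every j <> i: its coefficients are in    *)
(* R_{i}, and when j = 1 it is the bounded factor.                          *)
Lemma G_DJ j r c : j != i -> in_DJ one a [set~ j] (seriesmx G r c).
Proof.
move=> ji; split => [m|hj]; rewrite mxE /=.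
  have [hG _ _ _] := GH_coefficients m.
  by apply: (RJ_subset ha_int ha_nz _ (hG r c)); rewrite sub1set !inE eq_sym.
have ej : j = one by apply/eqP; move: hj; rewrite !inE negbK eq_sym.
apply: (limsup_root_le1_bounded C1_ge0) => m; have [_ _ bG _] := GH_coefficients m.
by apply: bG; rewrite /left_bounded -ej eq_sym.
Qed.

(* h = sum H_m t^m lies in D_{I\i}; when i = 1 it is the bounded factor. *)
Lemma H_DJ r c : in_DJ one a [set~ i] (seriesmx H r c).
Proof.
split => [m|hi]; rewrite mxE /=; first by have [_ hH _ _] := GH_coefficients m.
have ei : i = one by apply/eqP; move: hi; rewrite !inE negbK eq_sym.
apply: (limsup_root_le1_bounded C1_ge0) => m; have [_ _ _ bH] := GH_coefficients m.
by apply: bH; rewrite /left_bounded ei eqxx.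
Qed.
End Factorisation_of_b.


Theorem proposition3p4 (K : fieldExtType rat) (I : finType) (one : I) (a : I -> K)
    (ha_int : forall i : I, in_ring_of_integers (a i))
    (ha_nz : forall i : I, a i != 0)
    (ha_nunit : forall i : I, ~ (exists y : K, in_ring_of_integers y /\ a i * y = 1))
    (ha_cop : forall i j : I, i != j ->
       exists r s : K, [/\ in_ring_of_integers r, in_ring_of_integers s &
                           a i * r + a j * s = 1])
    (n : nat) (b : 'M[pseries K]_n)
    (hb : forall r c, in_DJ one a [set: I] (b r c))
    (hb1 : tabs_mx_lt1 (b - 1%:M)) :
  forall i : I, exists b'i bi : 'M[{fraction pseries K}]_n,
    [/\ in_GL (in_Qi' one a i) b'i, in_GL (in_Qi one a i) bi &
        map_mx (fun x => x%:F) b = b'i *m bi].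
Proof.
move=> i; set g := seriesmx (G one ha_int ha_nz ha_cop b i).
set h := seriesmx (H one ha_int ha_nz ha_cop b i).
have gD j : j != i -> forall r c, in_DJ one a [set~ j] (g r c).
  by move=> ji r c; apply: G_DJ.
have hD r c : in_DJ one a [set~ i] (h r c) by apply: H_DJ.
have g0 : coefmx g 0 = 1%:M by rewrite coefmxK.
have h0 : coefmx h 0 = 1%:M by rewrite coefmxK.
exists (map_mx (fun x => x%:F) g), (map_mx (fun x => x%:F) h); split.
- split => [|r c j ji|r c j ji]; first exact: unitmx_const1.
  + by have [_ gQ _] := GL_of_DJ ha_int ha_nz (gD j ji) g0; apply: gQ.
  + by have [_ _ gQ] := GL_of_DJ ha_int ha_nz (gD j ji) g0; apply: gQ.
- exact: (GL_of_DJ ha_int ha_nz hD h0).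
- by rewrite {1}(b_factor one ha_int ha_nz ha_cop i hb1) map_mxM.
Qed.
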